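(* Let $V$ be a real vector space of dimension $n$ and $1\le k\le n-1$. Every lagrangian subspace $L\subseteq V\oplus\wedge^kV^*$ satisfies condition (C2w) ($L\subseteq L^\perp$ and $L\cap V=\mathrm{pr}_2(L)^\circ$) and condition (C3s) ($L\subseteq L^\perp$ and $\mathrm{Ann}(\mathrm{pr}_1(L))=L\cap\wedge^kV^*$).
   Context: On $V\oplus\wedge^kV^*$ the pairing is $\langle X+\alpha,Y+\beta\rangle=i_X\beta+i_Y\alpha\in\wedge^{k-1}V^*$; $L^\perp$ is the orthogonal, and $L$ is lagrangian if $L=L^\perp$. $\mathrm{pr}_1,\mathrm{pr}_2$ are the projections onto $V$ and $\wedge^kV^*$. For $S\subseteq\wedge^kV^*$, $S^\circ=\{X\in V\mid i_X\eta=0\ \forall\eta\in S\}$; for $E\subseteq V$, $\mathrm{Ann}(E)=\{\alpha\in\wedge^kV^*\mid i_Y\alpha=0\ \forall Y\in E\}$. *)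

From HB Require Import structures.
From mathcomp Require Import all_boot all_order all_algebra.
From mathcomp Require Export reals.
Set Implicit Arguments. Unset Strict Implicit. Unset Printing Implicit Defensive.
Import Order.TTheory GRing.Theory Num.Theory.
Local Open Scope ring_scope.

(* V = R^n realised as 'rV[R]_n.  An element of ∧^k V^* is realised as an
   alternating multilinear map on k-tuples of vectors, i.e. a function
   ('I_k -> V) -> R satisfying [is_kform]. *)

Section Forms.
Variables (R : realType) (n k : nat).
Local Notation V := 'rV[R]_n.

Definition kfun := ('I_k -> V) -> R.

Definition upd (w : 'I_k -> V) (i : 'I_k) (x : V) : 'I_k -> V :=
  fun j => if j == i then x else w j.

Definition multilinear (a : kfun) : Prop :=
  forall (w : 'I_k -> V) (i : 'I_k) (c : R) (x y : V),
    a (upd w i (c *: x + y)) = c * a (upd w i x) + a (upd w i y).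

Definition alternating (a : kfun) : Prop :=
  forall (w : 'I_k -> V) (i j : 'I_k), i != j -> w i = w j -> a w = 0.

Definition is_kform (a : kfun) : Prop := multilinear a /\ alternating a.

(* the (k-1)-tuple w with X put in front: (X, w 0, ..., w (k-2)) *)
Definition vcons (X : V) (w : 'I_k.-1 -> V) : 'I_k -> V :=
  fun i => nth X (X :: codom w) i.

Definition iprod (X : V) (a : kfun) : ('I_k.-1 -> V) -> R :=
  fun w => a (vcons X w).

Definition elt := (V * kfun)%type.
Definition is_elt (p : elt) : Prop := is_kform p.2.

Definition elt_zero : elt := (0, fun _ => 0).
Definition elt_comb (c : R) (p q : elt) : elt :=
  (c *: p.1 + q.1, fun w => c * p.2 w + q.2 w).

Definition pairing (p q : elt) : ('I_k.-1 -> V) -> R :=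
  fun w => iprod p.1 q.2 w + iprod q.1 p.2 w.
Definition orth (p q : elt) : Prop := forall w, pairing p q w = 0.

Definition subspace (L : elt -> Prop) : Prop :=
  (forall p, L p -> is_elt p) /\ L elt_zero /\
  (forall c p q, L p -> L q -> L (elt_comb c p q)).

Definition perp (L : elt -> Prop) : elt -> Prop :=
  fun q => is_elt q /\ forall p, L p -> orth p q.

Definition lagrangian (L : elt -> Prop) : Prop :=
  subspace L /\ forall p, L p <-> perp L p.

Definition isotropic (L : elt -> Prop) : Prop :=
  forall p, L p -> perp L p.

Definition capV (L : elt -> Prop) : V -> Prop := fun X => L (X, fun _ => 0).
Definition pr2_circ (L : elt -> Prop) : V -> Prop :=
  fun X => forall p, L p -> forall w, iprod X p.2 w = 0.

Definition capForms (L : elt -> Prop) : kfun -> Prop := fun a => L (0, a).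
Definition ann_pr1 (L : elt -> Prop) : kfun -> Prop :=
  fun a => is_kform a /\ forall p, L p -> forall w, iprod p.1 a w = 0.

Definition C2w (L : elt -> Prop) : Prop :=
  isotropic L /\ forall X, capV L X <-> pr2_circ L X.
Definition C3s (L : elt -> Prop) : Prop :=
  isotropic L /\ forall a, ann_pr1 L a <-> capForms L a.

End Forms.

From mathcomp Require Import all_boot all_algebra reals.
From Stdlib Require Import FunctionalExtensionality.
Set Implicit Arguments.
Unset Strict Implicit.
Unset Printing Implicit Defensive.
Import GRing.Theory.
Local Open Scope ring_scope.

(* For L = L^perp, membership in L is tested by pairing against L.  Pairing
   (X, 0) with (Y, b) gives i_X b, and pairing (0, a) with (Y, b) gives i_Y a
   because i_0 b = 0 for a k-form b with k >= 1.  Hence L ∩ V = pr_2(L)^∘ and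
   L ∩ ∧^k V^* = Ann(pr_1(L)). *)

Section Pairing.
Variables (R : realType) (n k : nat).
Implicit Types (L : elt R n k -> Prop) (p : elt R n k) (a : kfun R n k).

Lemma multilinear_upd0 a w i : multilinear a -> a (upd w i 0) = 0.
Proof.
move=> ml; have := ml w i 1 0 0; rewrite scale1r addr0 mul1r.
by move/(congr1 (fun t => t - a (upd w i 0))); rewrite addrK subrr.
Qed.

Lemma iprod0 a w : (1 <= k)%N -> multilinear a -> iprod 0 a w = 0.
Proof.
move=> k_gt0 ml; rewrite /iprod.
have -> : vcons 0 w = upd (vcons 0 w) (Ordinal k_gt0) 0.
  by apply: functional_extensionality => j; rewrite /upd; case: eqP => // ->.
exact: multilinear_upd0.
Qed.

Lemma is_kform0 : @is_kform R n k (fun _ => 0).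
Proof. by split=> [w i c x y|w i j _ _]; rewrite ?mulr0 ?addr0. Qed.

Lemma pairing_vec p X w : pairing p (X, fun _ => 0) w = iprod X p.2 w.
Proof. by rewrite /pairing add0r. Qed.

Lemma pairing_form p a w :
  (1 <= k)%N -> is_elt p -> pairing p (0, a) w = iprod p.1 a w.
Proof. by move=> k_gt0 [ml _]; rewrite /pairing iprod0 ?addr0. Qed.

Lemma perp_vec_pr2_circ L X : perp L (X, fun _ => 0) <-> pr2_circ L X.
Proof.
split=> [[_ orthLX] p Lp w | circX]; first by rewrite -pairing_vec orthLX.
by split=> [|p Lp w]; rewrite ?pairing_vec; [exact: is_kform0 | exact: circX].
Qed.

Lemma perp_form_ann_pr1 L a :
  (1 <= k)%N -> (forall p, L p -> is_elt p) -> perp L (0, a) <-> ann_pr1 L a.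
Proof.
move=> k_gt0 eltL; split=> -[ka orthLa]; split=> // p Lp w.
  by rewrite -(pairing_form _ _ k_gt0 (eltL p Lp)) orthLa.
by rewrite pairing_form ?orthLa //; exact: eltL.
Qed.

Lemma lagrangian_isotropic L : lagrangian L -> isotropic L.
Proof. by move=> [_ lagL] p /lagL. Qed.

End Pairing.

Theorem lemmaA1 (R : realType) (n k : nat) (L : elt R n k -> Prop) :
  (1 <= k)%N -> (k <= n - 1)%N -> lagrangian L -> C2w L /\ C3s L.
Proof.
move=> k_gt0 _ lagL; have isoL := lagrangian_isotropic lagL.
have [[eltL _] perpL] := lagL.
split; split=> //.
  by move=> X; rewrite -perp_vec_pr2_circ; exact: perpL.
by move=> a; rewrite -perp_form_ann_pr1 //; exact: iff_sym (perpL _).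
Qed.
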